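(* In the allocation problem and Synchronized Greedy (SG) mechanism described in the context, suppose $\min_j q_j\ge \max_i r_i$. Then the SG mechanism is strategy-proof: for every agent $i$ and every permutation $\sigma_i$ of the goods, letting $\sigma$ be the bid profile in which agent $i$ bids $\sigma_i$ and every other agent $i'$ bids its true list $\pi_{i'}$, it is not the case that $a^\sigma_{i*} >_i a^\pi_{i*}$.
   Context: There are $m$ distinct divisible goods; good $j$ is available in amount $q_j>0$. There are $n$ agents; agent $i$ is to receive a total of $r_i>0$, with $\sum_j q_j=\sum_i r_i$. An allocation is a family $a_{ij}\ge 0$ with $\sum_j a_{ij}=r_i$ and $\sum_i a_{ij}=q_j$; $a_{i*}=(a_{i1},\ldots,a_{im})$ is agent $i$'s share. Each agent $i$ has a true preference list $\pi_i$, a permutation of the goods ($\pi_i(1)$ most preferred); $\pi=(\pi_1,\ldots,\pi_n)$. Agent $i$ prefers $a_{i*}$ to $b_{i*}$, written $a_{i*}>_i b_{i*}$, if the leftmost nonzero coordinate of $(a_{i\pi_i(\ell)}-b_{i\pi_i(\ell)})_{\ell=1}^m$ is positive. The SG mechanism: each agent $i$ bids a permutation $\sigma_i$ of the goods; over time $t\in[0,1]$ each agent $i$ receives, at rate $r_i$, the good highest in $\sigma_i$ among those not yet exhausted (a good is exhausted when the total amount handed out equals $q_j$; several agents may receive a good simultaneously; upon exhaustion, agents receiving it switch instantly to their next non-exhausted good). $a^\sigma_{ij}$ is the total amount of good $j$ agent $i$ receives under bid profile $\sigma$. *)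

From HB Require Import structures.
From mathcomp Require Import all_boot all_order all_algebra all_fingroup.
Set Implicit Arguments. Unset Strict Implicit. Unset Printing Implicit Defensive.
Import Order.TTheory GRing.Theory Num.Theory.
Local Open Scope ring_scope.

(* Goods are 'I_m, agents are 'I_n.  A preference list / bid is a permutation
   s : {perm 'I_m}; s k is the good at rank k (rank 0 = most preferred). *)

Section SG.
Variables (R : realFieldType) (n m : nat).

Definition lex_pref (p : {perm 'I_m}) (a b : 'I_m -> R) : Prop :=
  exists k : 'I_m, (forall l : 'I_m, (l < k)%N -> a (p l) = b (p l))
                   /\ b (p k) < a (p k).

Definition cur (s : {perm 'I_m}) (E : {set 'I_m}) : option 'I_m :=
  ohead [seq x <- [seq s k | k <- enum 'I_m] | x \notin E].

Record sg_state := SGState {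
  sg_time : R;
  sg_rem : 'I_m -> R;
  sg_alloc : 'I_n -> 'I_m -> R;
  sg_exh : {set 'I_m} }.

Variables (q : 'I_m -> R) (r : 'I_n -> R) (bid : 'I_n -> {perm 'I_m}).

Definition sg_rate (E : {set 'I_m}) (j : 'I_m) : R :=
  \sum_(i < n | cur (bid i) E == Some j) r i.

(* One phase of the synchronized eating: everybody eats its current good at
   rate r_i until the next exhaustion event (or until time 1). *)
Definition sg_step (st : sg_state) : sg_state :=
  let E := sg_exh st in
  let dt := \big[Num.min/(1 - sg_time st)]_(j < m | 0 < sg_rate E j)
              (sg_rem st j / sg_rate E j) in
  let rem' := fun j => sg_rem st j - dt * sg_rate E j in
  SGState (sg_time st + dt) rem'
    (fun i j => sg_alloc st i j + (if cur (bid i) E == Some j then dt * r i else 0))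
    (E :|: [set j | (0 < sg_rate E j) && (rem' j == 0)]).

Definition sg_init : sg_state := SGState 0 q (fun _ _ => 0) set0.

(* Each phase before time 1 exhausts at least one good, so m+1 phases suffice
   to reach time 1; further phases are no-ops. *)
Definition SG_alloc : 'I_n -> 'I_m -> R := sg_alloc (iter m.+1 sg_step sg_init).

End SG.

From HB Require Import structures.
From mathcomp Require Import all_boot all_order all_algebra all_fingroup.
From Stdlib Require Import FunctionalExtensionality.
From mathcomp Require Import ring lra zify.
Import Order.TTheory GRing.Theory Num.Theory.
Local Open Scope ring_scope.

Set Implicit Arguments.
Unset Strict Implicit.
Unset Printing Implicit Defensive.

(* Let k0 be the first phase at which agent i's bid and its true list point to
   different goods, and h the good i truthfully eats then.  Up to k0 both runs
   coincide and every good i prefers to h is already exhausted, so i's shares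
   of those goods agree; it remains to see that i ends with strictly less h.
   Truthfully, i eats h at full rate from tau = t_k0 until h runs out at time e.
   Comparing the consumption curves breakpoint by breakpoint, on [tau, e] the
   deviating run is ahead on every good other than h, and the other agents eat
   h at least as fast while it lasts.  If h is gone by e in the deviating run,
   i holds at most its share at e, strictly less than truthfully because it did
   not eat h right after tau.  Otherwise r_i <= q_h forces some other agent to
   hold h at e < 1; that agent keeps eating h after e when i deviates, so the
   others end with strictly more h than the truthful others had at e. *)

Section FirstInFilter.
Variables (T : eqType) (p : pred T).

Lemma ohead_filter_mem s x : ohead (filter p s) = Some x -> p x.
Proof. by elim: s => //= a s IH; case: ifP => pa //= [<-]. Qed.

Lemma ohead_filter_subpred (p' : pred T) s x :
  ohead (filter p s) = Some x -> subpred p' p -> p' x -> ohead (filter p' s) = Some x.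
Proof.
elim: s => //= a s IH; case: ifP => pa /=; first by case=> <- _ ->.
move=> Hs sub p'x; case: ifP => p'a /=; last exact: IH.
by move: (sub _ p'a); rewrite pa.
Qed.

Lemma ohead_filter_index s x l :
  ohead (filter p s) = Some x -> (l < index x s)%N -> forall x0, ~~ p (nth x0 s l).
Proof.
move=> + + x0; elim: s l => //= a s IH l; case: ifP => pa /=; first by case=> <-; rewrite eqxx.
move=> Hs; have -> : (a == x) = false.
  by apply/negbTE; apply: contraFN pa => /eqP ->; exact: ohead_filter_mem Hs.
by case: l => [|l] /=; [rewrite pa | rewrite ltnS; exact: IH].
Qed.

End FirstInFilter.

Section CurrentGood.
Variable m : nat.
Implicit Types (s : {perm 'I_m}) (E : {set 'I_m}).

Lemma cur_notin s E j : cur s E = Some j -> j \notin E.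
Proof. exact: ohead_filter_mem. Qed.

Lemma cur_subset s E E' j :
  cur s E = Some j -> E \subset E' -> j \notin E' -> cur s E' = Some j.
Proof.
move=> Hj /subsetP sub nj; apply: (ohead_filter_subpred Hj) => // x.
by apply: contra; apply: sub.
Qed.

Lemma cur_prefix_in s E j (l : 'I_m) :
  cur s E = Some j -> (l < (s^-1)%g j)%N -> s l \in E.
Proof.
move=> Hj lt; have idx : index j [seq s k | k <- enum 'I_m] = (s^-1)%g j.
  by rewrite -{1}(permKV s j) index_map ?index_enum_ord //; exact: perm_inj.
have := ohead_filter_index Hj; rewrite idx => /(_ l lt l).
by rewrite (nth_map l) ?size_enum_ord ?nth_ord_enum // negbK.
Qed.

Lemma cur_None_all s E : cur s E = None -> forall j, j \in E.
Proof.
rewrite /cur => H j; apply/negPn/negP => nj.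
have : j \in [seq x <- [seq s k | k <- enum 'I_m] | x \notin E].
  by rewrite mem_filter nj /= -(permKV s j) map_f ?mem_enum.
by case: [seq x <- _ | _] H.
Qed.

Lemma cur_None_indep s s' E : cur s E = None -> cur s' E = None.
Proof.
move/cur_None_all => H; rewrite /cur.
suff -> : [seq x <- [seq s' k | k <- enum 'I_m] | x \notin E] = [::] by [].
by apply/eqP; rewrite -[_ == _]negbK -has_filter; apply/hasPn => x _; rewrite H.
Qed.

End CurrentGood.

Section Lexicographic.
Variables (R : realFieldType) (m : nat).
Implicit Types (p : {perm 'I_m}) (a b : 'I_m -> R).

Lemma lex_pref_irrefl p a : ~ lex_pref p a a.
Proof. by case=> k [_]; rewrite ltxx. Qed.

Lemma not_lex_pref p a b (k : 'I_m) :
  (forall l : 'I_m, (l < k)%N -> a (p l) = b (p l)) -> a (p k) < b (p k) ->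
  ~ lex_pref p a b.
Proof.
move=> eq_before lt [k' [eq_before' lt']].
case: (ltngtP k' k) => [k'k|kk'|/val_inj E].
- by move: lt'; rewrite eq_before // ltxx.
- by move: lt; rewrite eq_before' // ltxx.
- by move: lt'; rewrite E => /(lt_trans lt); rewrite ltxx.
Qed.

End Lexicographic.

Section PreviousValue.
Context {disp : Order.disp_t} {T : orderType disp}.
Local Open Scope order_scope.

Lemma exists_prev_value (I : finType) (F : I -> T) (k0 : I) t : F k0 < t ->
  exists s, [/\ F k0 <= s, s < t,
    (#|[set k | (F k < s)%O]| < #|[set k | (F k < t)%O]|)%N & forall k, F k < t -> F k <= s].
Proof.
move=> Ft; case: (@arg_maxP _ _ _ k0 (fun k => (F k0 <= F k) && (F k < t)) F).
  by rewrite lexx.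
move=> k /andP [k0k kt] kmax; exists (F k); split=> //.
- apply: proper_card; rewrite properE; apply/andP; split.
    by apply/subsetP => x; rewrite !inE => /lt_trans; apply.
  by apply/subsetPn; exists k; rewrite !inE ?kt ?ltxx.
- move=> x xt; case: (leP (F k0) (F x)) => [k0x|xk0]; first by apply: kmax; rewrite k0x.
  exact: le_trans (ltW xk0) k0k.
Qed.

End PreviousValue.

Section SynchronizedGreedy.
Variables (R : realFieldType) (n m : nat) (q : 'I_m -> R) (r : 'I_n -> R).
Hypotheses (q_gt0 : forall j, 0 < q j) (r_gt0 : forall i, 0 < r i).

Section Run.
Variable bid : 'I_n -> {perm 'I_m}.

Definition sg_run k := iter k (sg_step r bid) (sg_init n q).

Lemma sg_runS k : sg_run k.+1 = sg_step r bid (sg_run k).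
Proof. by []. Qed.

Definition run_time k := sg_time (sg_run k).
Definition run_exh k := sg_exh (sg_run k).
Definition run_rem k := sg_rem (sg_run k).
Definition run_alloc k := sg_alloc (sg_run k).
Definition eat_rate k a j := if cur (bid a) (run_exh k) == Some j then r a else 0.
Definition phase_rate k j := sg_rate r bid (run_exh k) j.
Definition phase_len k :=
  \big[Num.min/(1 - run_time k)]_(j < m | 0 < phase_rate k j) (run_rem k j / phase_rate k j).

Lemma phase_rateE k j : phase_rate k j = \sum_a eat_rate k a j.
Proof. by rewrite /phase_rate /sg_rate big_mkcond. Qed.

Lemma eat_rate_ge0 k a j : 0 <= eat_rate k a j.
Proof. by rewrite /eat_rate; case: ifP => _ //; exact: ltW. Qed.

Lemma eat_rate_le k a j : eat_rate k a j <= r a.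
Proof. by rewrite /eat_rate; case: ifP => _ //; exact: ltW. Qed.

Lemma phase_rate_ge0 k j : 0 <= phase_rate k j.
Proof. by rewrite phase_rateE sumr_ge0 // => a _; exact: eat_rate_ge0. Qed.

Lemma run_timeS k : run_time k.+1 = run_time k + phase_len k.
Proof. by []. Qed.

Lemma run_remS k j : run_rem k.+1 j = run_rem k j - phase_len k * phase_rate k j.
Proof. by []. Qed.

Lemma run_allocS k a j : run_alloc k.+1 a j = run_alloc k a j + phase_len k * eat_rate k a j.
Proof. by rewrite /run_alloc /= /eat_rate; case: ifP => _; rewrite ?mulr0. Qed.

Lemma run_exhS k :
  run_exh k.+1 = run_exh k :|: [set j | (0 < phase_rate k j) && (run_rem k.+1 j == 0)].
Proof. by []. Qed.

Lemma first_exh_phase j : exists k1, [/\ (k1 <= m.+1)%N,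
  forall k, (k < k1)%N -> j \notin run_exh k & (k1 < m.+1)%N -> j \in run_exh k1].
Proof.
pose exh_by k := (m.+1 <= k)%N || (j \in run_exh k).
have exh_ex : exists k, exh_by k by exists m.+1; rewrite /exh_by leqnn.
have [k1 exh_k1 k1_min] := ex_minnP exh_ex.
exists k1; split=> [|k kk1|k1M]; first by apply: k1_min; rewrite /exh_by leqnn.
  by apply: contraTN kk1 => jE; rewrite -leqNgt k1_min // /exh_by jE orbT.
by move: exh_k1; rewrite /exh_by leqNgt k1M.
Qed.

Lemma run_exh_subS k : run_exh k \subset run_exh k.+1.
Proof. by rewrite run_exhS subsetUl. Qed.

Lemma run_exh_mono k k' : (k <= k')%N -> run_exh k \subset run_exh k'.
Proof.
move=> /subnK <-; elim: (k' - k)%N => [|d IH] //.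
by rewrite addSn (subset_trans IH) ?run_exh_subS.
Qed.

Lemma eat_rate_exh k a j : j \in run_exh k -> eat_rate k a j = 0.
Proof. by rewrite /eat_rate; case: eqP => // /cur_notin /negPf ->. Qed.

Lemma phase_rate_gt0_notin k j : 0 < phase_rate k j -> j \notin run_exh k.
Proof.
apply: contraTN => jE.
by rewrite phase_rateE big1 ?ltxx // => a _; exact: eat_rate_exh.
Qed.

Definition run_wf k := [/\ 0 <= run_time k, run_time k <= 1,
  {in run_exh k, forall j, run_rem k j = 0} &
  {in [predC run_exh k], forall j, 0 < run_rem k j}].

Lemma phase_len_le k : phase_len k <= 1 - run_time k.
Proof. exact: bigmin_le_id. Qed.

Lemma phase_len_le_rem k j : 0 < phase_rate k j -> phase_len k <= run_rem k j / phase_rate k j.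
Proof. by move=> Hj; apply: (bigmin_le_cond _ (P := fun j => 0 < phase_rate k j)). Qed.

Lemma phase_len_ge0 k : run_wf k -> 0 <= phase_len k.
Proof.
case=> _ t1 rem0 rem_gt0; apply/bigmin_geP; split; first by rewrite subr_ge0.
move=> j Hj; rewrite divr_ge0 ?(ltW Hj) // ltW // rem_gt0 // inE.
exact: phase_rate_gt0_notin.
Qed.

Lemma phase_len_gt0 k : run_wf k -> run_time k < 1 -> 0 < phase_len k.
Proof.
case=> _ _ _ rem_gt0 t1; apply/bigmin_gtP; split; first by rewrite subr_gt0.
by move=> j Hj; rewrite divr_gt0 // rem_gt0 // inE phase_rate_gt0_notin.
Qed.

Lemma phase_len_cases k : phase_len k = 1 - run_time k \/
  exists2 j, 0 < phase_rate k j & phase_len k = run_rem k j / phase_rate k j.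
Proof.
rewrite /phase_len; elim/big_ind: _ => [|x y Hx Hy|j Hj]; [by left| |by right; exists j].
by rewrite /Num.min; case: ifP.
Qed.

Lemma run_wf_all k : run_wf k.
Proof.
elim: k => [|k IH].
  by split=> //= j; rewrite inE // => _; exact: q_gt0.
have d0 := phase_len_ge0 IH; have d1 := phase_len_le k.
case: IH => t0 t1 rem0 rem_gt0; split.
- by rewrite run_timeS addr_ge0.
- by rewrite run_timeS -lerBrDl.
- move=> j; rewrite run_exhS !inE => /orP [jE|/andP [_ /eqP //]].
  by rewrite run_remS rem0 // phase_rateE big1 ?mulr0 ?subr0 // => a _; exact: eat_rate_exh.
- move=> j; rewrite run_exhS !inE negb_or => /andP [jE]; rewrite run_remS.
  have [Hj|Hj] := ltP 0 (phase_rate k j); last first.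
    have -> : phase_rate k j = 0 by apply/eqP; rewrite eq_le Hj phase_rate_ge0.
    by rewrite mulr0 subr0 rem_gt0 ?inE.
  rewrite /= lt_neqAle eq_sym => ->; rewrite subr_ge0 -ler_pdivlMr //.
  exact: phase_len_le_rem.
Qed.

Lemma run_rem_ge0 k j : 0 <= run_rem k j.
Proof.
case: (run_wf_all k) => _ _ rem0 rem_gt0.
by case: (boolP (j \in run_exh k)) => jE; [rewrite rem0 | rewrite ltW ?rem_gt0].
Qed.

Lemma run_time_ge0 k : 0 <= run_time k. Proof. by case: (run_wf_all k). Qed.
Lemma run_time_le1 k : run_time k <= 1. Proof. by case: (run_wf_all k). Qed.

Lemma run_time_leS k : run_time k <= run_time k.+1.
Proof. by rewrite run_timeS lerDl (phase_len_ge0 (run_wf_all k)). Qed.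

Lemma run_time_mono k k' : (k <= k')%N -> run_time k <= run_time k'.
Proof.
move=> /subnK <-; elim: (k' - k)%N => [|d IH] //.
by rewrite addSn (le_trans IH) ?run_time_leS.
Qed.

Lemma run_time_ltS k : run_time k < 1 -> run_time k < run_time k.+1.
Proof. by move=> t1; rewrite run_timeS ltrDl (phase_len_gt0 (run_wf_all k)). Qed.

Lemma phase_len_end k : run_time k = 1 -> phase_len k = 0.
Proof.
move=> t1; apply/eqP; rewrite eq_le (phase_len_ge0 (run_wf_all k)) andbT.
by rewrite (le_trans (phase_len_le k)) // t1 subrr.
Qed.

(* Each phase ending before time 1 exhausts a new good. *)
Lemma run_time_end_or_card k : run_time k = 1 \/ (k <= #|run_exh k|)%N.
Proof.
elim: k => [|k [t1|IH]]; first by right.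
  by left; rewrite run_timeS phase_len_end // t1 addr0.
case: (phase_len_cases k) => [d1|[j Hj dj]].
  by left; rewrite run_timeS d1 addrC subrK.
right; apply: (leq_ltn_trans IH); apply: proper_card.
rewrite properEneq run_exh_subS andbT; apply/negP => /eqP E.
have : j \in run_exh k.+1.
  rewrite run_exhS !inE Hj /= run_remS dj.
  by rewrite mulfVK ?subrr ?eqxx ?orbT // gt_eqF.
by rewrite -E; apply/negP; exact: phase_rate_gt0_notin.
Qed.

Lemma run_time_last : run_time m.+1 = 1.
Proof.
case: (run_time_end_or_card m.+1) => // H; exfalso.
by move: (leq_trans H (max_card _)); rewrite card_ord ltnn.
Qed.

Lemma run_rem_alloc k j : run_rem k j + \sum_a run_alloc k a j = q j.
Proof.
elim: k => [|k IH]; first by rewrite /run_rem /run_alloc /= big1 ?addr0.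
rewrite run_remS -IH; under eq_bigr do rewrite run_allocS.
by rewrite big_split /= -mulr_sumr -phase_rateE; ring.
Qed.

Lemma run_alloc_exh k k' a j :
  j \in run_exh k -> (k <= k')%N -> run_alloc k' a j = run_alloc k a j.
Proof.
move=> jE /subnK <-; elim: (k' - k)%N => [|d IH] //.
rewrite addSn run_allocS IH eat_rate_exh ?mulr0 ?addr0 //.
by move/subsetP: (run_exh_mono (leq_addl d k)); apply.
Qed.

Lemma run_frozen k d : run_time k = 1 ->
  run_time (k + d) = 1 /\ run_alloc (k + d) = run_alloc k.
Proof.
move=> t1; elim: d => [|d [IH1 IH2]]; first by rewrite addn0.
rewrite addnS; split; first by rewrite run_timeS phase_len_end // IH1 addr0.
apply: functional_extensionality => a; apply: functional_extensionality => j.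
by rewrite run_allocS phase_len_end // mul0r addr0 IH2.
Qed.

(* The allocation as a function of continuous time x: a phase-indexed rate f
   is integrated against the length of [0, x] within each phase. *)
Definition overlap k x := Num.max 0 (Num.min x (run_time k.+1) - run_time k).
Definition integral (f : nat -> R) x := \sum_(0 <= k < m.+1) f k * overlap k x.

Lemma phase_lenE k : phase_len k = run_time k.+1 - run_time k.
Proof. by rewrite run_timeS addrC addKr. Qed.

Lemma overlap_full k x : run_time k.+1 <= x -> overlap k x = phase_len k.
Proof.
move=> H; rewrite /overlap (min_r H) -phase_lenE max_r //.
exact: phase_len_ge0 (run_wf_all k).
Qed.

Lemma overlap_before k x : x <= run_time k -> overlap k x = 0.
Proof. by move=> H; rewrite /overlap max_l // subr_le0 (le_trans _ H) // ge_min lexx. Qed.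

Lemma overlap_mid k x : run_time k <= x -> x <= run_time k.+1 -> overlap k x = x - run_time k.
Proof. by move=> H1 H2; rewrite /overlap (min_l H2) max_r // subr_ge0. Qed.

Lemma overlap_le k x : overlap k x <= phase_len k.
Proof.
rewrite /overlap ge_max (phase_len_ge0 (run_wf_all k)) phase_lenE lerB //.
by rewrite ge_min lexx orbT.
Qed.

Lemma overlap_mono k : {homo overlap k : x y / x <= y}.
Proof.
move=> x y H; rewrite /overlap ge_max !le_max lexx /=; apply/orP; right; apply: lerB => //.
by rewrite le_min !ge_min H lexx !orbT.
Qed.

Lemma integral_in_phase_sum (f : nat -> R) p x : (p < m.+1)%N ->
  run_time p <= x -> x <= run_time p.+1 ->
  integral f x = \sum_(0 <= k < p) f k * phase_len k + (x - run_time p) * f p.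
Proof.
move=> pM H1 H2; rewrite /integral (big_cat_nat (n := p)) //= ?(ltnW pM) //.
rewrite big_nat_recl //= overlap_mid // mulrC.
have -> : \sum_(p <= k < m) f k.+1 * overlap k.+1 x = 0.
  rewrite big_nat big1 // => k /andP [pk _].
  by rewrite overlap_before ?mulr0 // (le_trans H2) // run_time_mono.
rewrite addr0.
congr (_ + _); apply: eq_big_nat => k /andP [_ kp]; rewrite overlap_full //.
by rewrite (le_trans _ H1) // run_time_mono.
Qed.

Lemma integral_at_phase (f : nat -> R) p : (p <= m.+1)%N ->
  integral f (run_time p) = \sum_(0 <= k < p) f k * phase_len k.
Proof.
rewrite leq_eqVlt => /orP [/eqP ->|pM].
  apply: eq_big_nat => k /andP [_ kp]; rewrite overlap_full //; exact: run_time_mono.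
by rewrite (integral_in_phase_sum f pM) ?subrr ?mul0r ?addr0 ?run_time_leS.
Qed.

Lemma integral_in_phase (f : nat -> R) p x : (p < m.+1)%N ->
  run_time p <= x -> x <= run_time p.+1 ->
  integral f x = integral f (run_time p) + (x - run_time p) * f p.
Proof. by move=> pM H1 H2; rewrite (integral_in_phase_sum f pM) // integral_at_phase // ltnW. Qed.

Lemma integral_mono (f : nat -> R) : (forall k, 0 <= f k) -> {homo integral f : x y / x <= y}.
Proof.
move=> f0 x y H; apply: ler_sum => k _; apply: ler_wpM2l => //; exact: overlap_mono.
Qed.

Lemma integral_le_end (f : nat -> R) x : (forall k, 0 <= f k) ->
  integral f x <= integral f (run_time m.+1).
Proof.
move=> f0; rewrite integral_at_phase //; apply: ler_sum => k _.
by rewrite ler_wpM2l // overlap_le.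
Qed.

Lemma exists_phase x : 0 <= x -> x < 1 ->
  exists p, [/\ (p < m.+1)%N, run_time p <= x & x < run_time p.+1].
Proof.
move=> x0 x1; have ex : exists k, (m.+1 <= k)%N || (x < run_time k) by exists m.+1; rewrite leqnn.
case: (ex_minnP ex) => [[|p]] Pk kmin; first by move: Pk; rewrite ltNge x0.
have pM : (p < m.+1)%N by apply: kmin; rewrite leqnn.
exists p; split=> //.
  by rewrite leNgt; apply/negP => lt; have := kmin p; rewrite lt orbT ltnn => /(_ isT).
move: Pk => /orP [Mp|//]; have -> : p = m by lia.
by rewrite run_time_last.
Qed.

Lemma integral1 x : 0 <= x -> x <= 1 -> integral (fun=> 1) x = x.
Proof.
have at_phase p : (p <= m.+1)%N -> integral (fun=> 1) (run_time p) = run_time p.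
  move=> /integral_at_phase ->; elim: p => [|p IH]; first by rewrite big_nil.
  by rewrite big_nat_recr //= IH mul1r run_timeS.
move=> x0; rewrite le_eqVlt => /orP [/eqP ->|x1].
  by have := at_phase _ (leqnn m.+1); rewrite run_time_last.
case: (exists_phase x0 x1) => p [pM H1 H2].
by rewrite (integral_in_phase _ pM H1 (ltW H2)) at_phase ?(ltnW pM) // mulr1 addrC subrK.
Qed.

Lemma integral_lipschitz (f : nat -> R) c x y :
  (forall k, 0 <= f k) -> (forall k, f k <= c) ->
  0 <= x -> x <= y -> y <= 1 -> integral f y - integral f x <= c * (y - x).
Proof.
move=> f0 fc x0 xy y1.
rewrite -{2}(integral1 x0 (le_trans xy y1)) -{2}(integral1 (le_trans x0 xy) y1).
rewrite /integral -!sumrB mulr_sumr; apply: ler_sum => k _.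
rewrite !mul1r -!mulrBr; apply: ler_wpM2r; last exact: fc.
by rewrite subr_ge0 overlap_mono.
Qed.

Definition held a j x := integral (fun k => eat_rate k a j) x.
Definition consumed j x := \sum_a held a j x.

Lemma held_at_phase a j p : (p <= m.+1)%N -> held a j (run_time p) = run_alloc p a j.
Proof.
move=> pM; rewrite /held integral_at_phase //.
elim: p pM => [|p IH] pM; first by rewrite big_nil.
by rewrite big_nat_recr // IH ?(ltnW pM) // run_allocS mulrC.
Qed.

Lemma held_mono a j : {homo held a j : x y / x <= y}.
Proof. by apply: integral_mono => k; exact: eat_rate_ge0. Qed.

Lemma held_in_phase a j p x : (p < m.+1)%N ->
  run_time p <= x -> x <= run_time p.+1 ->
  held a j x = run_alloc p a j + (x - run_time p) * eat_rate p a j.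
Proof.
by move=> pM H1 H2; rewrite /held (integral_in_phase _ pM H1 H2) -held_at_phase // ltnW.
Qed.

Lemma held_lipschitz a j x y : 0 <= x -> x <= y -> y <= 1 ->
  held a j y - held a j x <= r a * (y - x).
Proof. by apply: integral_lipschitz => k; [exact: eat_rate_ge0 | exact: eat_rate_le]. Qed.

Lemma held_shift a j p x y : (p < m.+1)%N ->
  run_time p <= x -> x <= y -> y <= run_time p.+1 ->
  held a j y = held a j x + (y - x) * eat_rate p a j.
Proof.
move=> pM H1 H2 H3; rewrite (held_in_phase a j pM H1 (le_trans H2 H3)).
by rewrite (held_in_phase a j pM (le_trans H1 H2) H3); ring.
Qed.

Lemma held_ge0 a j x : 0 <= held a j x.
Proof. by apply: sumr_ge0 => k _; rewrite mulr_ge0 ?eat_rate_ge0 // le_max lexx. Qed.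

Lemma held_at0 a j : held a j 0 = 0.
Proof.
by rewrite /held /integral big1 // => k _; rewrite overlap_before ?mulr0 ?run_time_ge0.
Qed.

Lemma held_gt0 a j x : 0 < held a j x ->
  exists k, [/\ (k < m.+1)%N, cur (bid a) (run_exh k) = Some j & run_time k < x].
Proof.
rewrite /held /integral lt_def => /andP [+ _].
rewrite psumr_neq0 => [/hasP [k]|k _]; last by rewrite mulr_ge0 ?eat_rate_ge0 // le_max lexx.
rewrite mem_index_iota /= => kM /lt0r_neq0; rewrite mulf_eq0 negb_or.
move=> /andP [rate_k overlap_k].
exists k; split=> //.
  by apply/eqP; apply: contraNT rate_k => ne; rewrite /eat_rate (negbTE ne).
by rewrite ltNge; apply: contra overlap_k => /overlap_before ->.
Qed.

Lemma consumed_at_phase j p : (p <= m.+1)%N -> consumed j (run_time p) = q j - run_rem p j.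
Proof.
move=> pM; rewrite /consumed; under eq_bigr do rewrite held_at_phase //.
by rewrite -(run_rem_alloc p j) addrC addKr.
Qed.

Lemma consumed_mono j : {homo consumed j : x y / x <= y}.
Proof. by move=> x y H; apply: ler_sum => a _; exact: held_mono. Qed.

Lemma consumed_le j x : consumed j x <= q j.
Proof.
rewrite (le_trans (y := consumed j (run_time m.+1))) //.
  by apply: ler_sum => a _; apply: integral_le_end => k; exact: eat_rate_ge0.
by rewrite consumed_at_phase // gerBl run_rem_ge0.
Qed.

Lemma consumed_shift j p x y : (p < m.+1)%N ->
  run_time p <= x -> x <= y -> y <= run_time p.+1 ->
  consumed j y = consumed j x + (y - x) * phase_rate p j.
Proof.
move=> pM H1 H2 H3; rewrite /consumed phase_rateE mulr_sumr -big_split.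
by apply: eq_bigr => a _; rewrite (held_shift a j pM H1 H2 H3).
Qed.

Lemma consumed_exh j p x : (p <= m.+1)%N -> j \in run_exh p -> run_time p <= x ->
  consumed j x = q j.
Proof.
move=> pM jE H; apply/eqP; rewrite eq_le consumed_le /= (le_trans _ (consumed_mono j H)) //.
by case: (run_wf_all p) => _ _ rem0 _; rewrite consumed_at_phase // rem0 // subr0.
Qed.

Lemma exh_of_consumed j p x : (p < m.+1)%N ->
  run_time p <= x -> x < run_time p.+1 -> consumed j x = q j -> j \in run_exh p.
Proof.
move=> pM H1 H2 Cq; apply/negPn/negP => jn.
case: (run_wf_all p) => _ _ _ rem_gt0; have rem_j := rem_gt0 j jn.
have E : (x - run_time p) * phase_rate p j = run_rem p j.
  move: Cq (consumed_shift j pM (lexx _) H1 (ltW H2)).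
  rewrite consumed_at_phase ?(ltnW pM) //.
  by move: (consumed j x) ((x - run_time p) * phase_rate p j) => c d; lra.
have [Hj|Hj] := ltP 0 (phase_rate p j); last first.
  have r0 : phase_rate p j = 0 by apply/eqP; rewrite eq_le Hj phase_rate_ge0.
  by move: E rem_j; rewrite r0 mulr0 => <-; rewrite ltxx.
have : (x - run_time p) * phase_rate p j < run_rem p j.
  rewrite -ltr_pdivlMr //; apply: lt_le_trans (phase_len_le_rem Hj).
  by rewrite phase_lenE ltrBlDr subrK.
by rewrite E ltxx.
Qed.

End Run.

Definition others (bid : 'I_n -> {perm 'I_m}) i j x := \sum_(a | a != i) held bid a j x.

Lemma consumed_split bid i j x : consumed bid j x = held bid i j x + others bid i j x.
Proof. by rewrite /consumed (bigD1 i). Qed.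

Lemma others_mono bid i j : {homo others bid i j : x y / x <= y}.
Proof. by move=> x y H; apply: ler_sum => a _; exact: held_mono. Qed.

Lemma others_shift bid i j p x y : (p < m.+1)%N ->
  run_time bid p <= x -> x <= y -> y <= run_time bid p.+1 ->
  others bid i j y = others bid i j x + (y - x) * \sum_(a | a != i) eat_rate bid p a j.
Proof.
move=> pM H1 H2 H3; rewrite /others mulr_sumr -big_split.
by apply: eq_bigr => a _; exact: held_shift.
Qed.

Lemma sg_step_eq_cur (bid bid' : 'I_n -> {perm 'I_m}) (s : sg_state R n m) :
  (forall a, cur (bid a) (sg_exh s) = cur (bid' a) (sg_exh s)) ->
  sg_step r bid s = sg_step r bid' s.
Proof.
move=> same_cur; have same_rate : sg_rate r bid (sg_exh s) = sg_rate r bid' (sg_exh s).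
  by apply: functional_extensionality => j; apply: eq_bigl => a; rewrite same_cur.
rewrite /sg_step same_rate; congr SGState.
apply: functional_extensionality => a; apply: functional_extensionality => j.
by rewrite same_cur.
Qed.

Lemma sg_run_agree (bS bP : 'I_n -> {perm 'I_m}) i k :
  (forall a, a != i -> bS a = bP a) ->
  (forall l, (l < k)%N -> cur (bS i) (run_exh bP l) = cur (bP i) (run_exh bP l)) ->
  sg_run bS k = sg_run bP k.
Proof.
move=> bS_bP; elim: k => [|k IH] agree //.
rewrite !sg_runS IH => [|l lk]; last by apply: agree; exact: ltnW.
apply: sg_step_eq_cur => a; case: (eqVneq a i) => [->|ai]; first exact: agree.
by rewrite bS_bP.
Qed.

Lemma sg_alloc_agree (bS bP : 'I_n -> {perm 'I_m}) k : (k <= m.+1)%N ->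
  sg_run bS k = sg_run bP k -> run_time bP k = 1 -> SG_alloc q r bS = SG_alloc q r bP.
Proof.
move=> kM agree t1; have tS1 : run_time bS k = 1 by rewrite /run_time agree.
have -> : SG_alloc q r bS = run_alloc bS m.+1 by [].
have -> : SG_alloc q r bP = run_alloc bP m.+1 by [].
rewrite -(subnKC kM) (proj2 (run_frozen (m.+1 - k) tS1)).
by rewrite (proj2 (run_frozen (m.+1 - k) t1)) /run_alloc agree.
Qed.

Hypothesis r_le_q : forall a j, r a <= q j.

Section Deviation.
Variables (bP bS : 'I_n -> {perm 'I_m}) (i : 'I_n) (k0 k1 : nat) (h : 'I_m).
Hypotheses (bS_bP : forall a, a != i -> bS a = bP a) (k0_le : (k0 <= m)%N)
  (run_k0 : sg_run bS k0 = sg_run bP k0)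
  (cur_k0 : cur (bP i) (run_exh bP k0) = Some h)
  (cur_dev_k0 : cur (bS i) (run_exh bP k0) != Some h)
  (tau_lt1 : run_time bP k0 < 1).
Hypotheses (k1_le : (k1 <= m.+1)%N)
  (h_notin_before_k1 : forall k, (k < k1)%N -> h \notin run_exh bP k)
  (h_in_k1 : (k1 < m.+1)%N -> h \in run_exh bP k1).

Local Notation tP := (run_time bP).
Local Notation tS := (run_time bS).
Local Notation EP := (run_exh bP).
Local Notation ES := (run_exh bS).
Local Notation HP := (held bP).
Local Notation HS := (held bS).
Local Notation CP := (consumed bP).
Local Notation CS := (consumed bS).
Local Notation OP := (others bP i h).
Local Notation OS := (others bS i h).
Local Notation tau := (run_time bP k0).
Local Notation t_exh := (run_time bP k1).
Local Notation share0 := (run_alloc bP k0 i h).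

Lemma run_time_dev_k0 : tS k0 = tau.
Proof. by rewrite /run_time run_k0. Qed.

Lemma run_exh_dev_k0 : ES k0 = EP k0.
Proof. by rewrite /run_exh run_k0. Qed.

Lemma k0_lt_k1 : (k0 < k1)%N.
Proof.
rewrite ltnNge; apply/negP => k1k0.
have /subsetP sub := run_exh_mono bP k1k0.
by move: (cur_notin cur_k0); rewrite sub ?h_in_k1 //; apply: leq_ltn_trans k1k0 _.
Qed.

Lemma cur_truthful k : (k0 <= k)%N -> (k < k1)%N -> cur (bP i) (EP k) = Some h.
Proof.
by move=> k0k kk1; apply: cur_subset cur_k0 _ (h_notin_before_k1 kk1); exact: run_exh_mono.
Qed.

Lemma truthful_alloc_h : run_alloc bP m.+1 i h = share0 + r i * (t_exh - tau).
Proof.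
have eating d : (k0 + d <= k1)%N ->
    run_alloc bP (k0 + d) i h = share0 + r i * (tP (k0 + d) - tau).
  elim: d => [|d IH] Hd; first by rewrite addn0 subrr mulr0 addr0.
  rewrite addnS in Hd *; rewrite run_allocS IH ?(ltnW Hd) // run_timeS.
  by rewrite /eat_rate cur_truthful ?leq_addr // eqxx; ring.
have := eating (k1 - k0)%N; rewrite subnKC ?(ltnW k0_lt_k1) // => /(_ (leqnn _)) <-.
move: k1_le; rewrite leq_eqVlt => /orP [/eqP -> //|k1M].
by apply: run_alloc_exh; [exact: h_in_k1 | exact: ltnW].
Qed.

Lemma tau_lt_t_exh : tau < t_exh.
Proof. exact: lt_le_trans (run_time_ltS tau_lt1) (run_time_mono _ k0_lt_k1). Qed.

Lemma share0_le : share0 <= r i * tau.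
Proof.
have := held_lipschitz bP i h (lexx 0) (run_time_ge0 bP k0) (ltW tau_lt1).
by rewrite held_at0 held_at_phase ?subr0 // ltnW.
Qed.

Lemma deviating_held_h_lt x : tau < x -> x <= 1 -> HS i h x < share0 + r i * (x - tau).
Proof.
have not_eating : eat_rate bS k0 i h = 0.
  by rewrite /eat_rate run_exh_dev_k0 (negbTE cur_dev_k0).
have share0_dev : run_alloc bS k0 = run_alloc bP k0 by rewrite /run_alloc run_k0.
have tS_k0S : tau < tS k0.+1.
  by rewrite -run_time_dev_k0 run_time_ltS // run_time_dev_k0.
move=> taux x1; have [xS|Sx] := leP x (tS k0.+1).
  rewrite (@held_in_phase bS i h k0 x) ?run_time_dev_k0 ?(ltW taux) // not_eating.
  by rewrite mulr0 addr0 share0_dev ltrDl mulr_gt0 ?subr_gt0.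
have := held_lipschitz bS i h (run_time_ge0 bS k0.+1) (ltW Sx) x1.
rewrite held_at_phase // run_allocS not_eating mulr0 addr0 share0_dev.
have : r i * (x - tS k0.+1) < r i * (x - tau) by rewrite ltr_pM2l // ltrD2l ltrN2.
lra.
Qed.

(* Invariant on [tau, t_exh]: the deviating run is ahead on every good but h,
   and, while h lasts, on the other agents' share of h. *)
Definition dominated t :=
  (forall j, j != h -> CP j t <= CS j t) /\ (CS h t < q h -> OP t <= OS t).

Lemma dominated_tau : dominated tau.
Proof.
have k0M : (k0 <= m.+1)%N by apply: leqW.
split=> [j _|_].
  by rewrite -{2}run_time_dev_k0 !consumed_at_phase // /run_rem run_k0.
apply: ler_sum => a _; rewrite -{2}run_time_dev_k0 !held_at_phase //.
by rewrite /run_alloc run_k0.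
Qed.

Lemma exh_dominated s p b : dominated s -> (p < m.+1)%N -> tS p <= s -> s < tS p.+1 ->
  (b <= m.+1)%N -> tP b <= s -> h \notin EP b -> EP b \subset ES p.
Proof.
move=> [dom_goods _] pM Sp1 Sp2 bM Pb hb; apply/subsetP => g gE.
have gh : g != h by apply: contraNneq hb => <-.
apply: (exh_of_consumed pM Sp1 Sp2); apply/eqP; rewrite eq_le consumed_le /=.
by rewrite -(consumed_exh bM gE Pb) dom_goods.
Qed.

Lemma eat_rate_dominated p b a j :
  cur (bP i) (EP b) = Some h -> EP b \subset ES p -> j \notin ES p ->
  (a != i) || (j != h) -> eat_rate bP b a j <= eat_rate bS p a j.
Proof.
move=> cur_b sub jn aj; rewrite /eat_rate; case: eqP => [E|_]; last first.
  by case: ifP => // _; exact: ltW.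
case: (eqVneq a i) E aj => [-> E /= jh|ai E _].
  by move: E jh; rewrite cur_b => -[->]; rewrite eqxx.
by rewrite bS_bP // (cur_subset E sub jn) eqxx.
Qed.

Lemma dominated_step s t p b : tau <= s -> s < t -> t <= t_exh -> dominated s ->
  (p < m.+1)%N -> tS p <= s -> t <= tS p.+1 ->
  (b < m.+1)%N -> tP b <= s -> t <= tP b.+1 -> dominated t.
Proof.
move=> tau_s st t_e dom_s pM Sp1 Sp2 bM Pb1 Pb2; have st' := ltW st.
have k0b : (k0 <= b)%N.
  rewrite leqNgt; apply/negP => /(run_time_mono bP) tb.
  by have := lt_le_trans st (le_trans Pb2 (le_trans tb tau_s)); rewrite ltxx.
have bk1 : (b < k1)%N.
  rewrite ltnNge; apply/negP => /(run_time_mono bP) tb.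
  by have := lt_le_trans st (le_trans t_e (le_trans tb Pb1)); rewrite ltxx.
have sub := exh_dominated dom_s pM Sp1 (lt_le_trans st Sp2) (ltnW bM) Pb1 (h_notin_before_k1 bk1).
have dom_rate := eat_rate_dominated (cur_truthful k0b bk1) sub.
case: dom_s => dom_goods dom_h; split=> [j jh|CSt].
  case: (boolP (j \in ES p)) => jE.
    by rewrite (consumed_exh (ltnW pM) jE (le_trans Sp1 st')) consumed_le.
  rewrite (consumed_shift j bM Pb1 st' Pb2) (consumed_shift j pM Sp1 st' Sp2).
  rewrite lerD ?dom_goods // ler_wpM2l ?subr_ge0 // !phase_rateE ler_sum // => a _.
  by apply: dom_rate; rewrite ?jh ?orbT.
have hS : h \notin ES p.
  by apply: contraTN CSt => hE; rewrite (consumed_exh (ltnW pM) hE (le_trans Sp1 st')) ltxx.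
rewrite (others_shift _ _ bM Pb1 st' Pb2) (others_shift _ _ pM Sp1 st' Sp2).
rewrite lerD ?dom_h ?(le_lt_trans (consumed_mono _ _ st') CSt) //.
by rewrite ler_wpM2l ?subr_ge0 // ler_sum // => a ai; apply: dom_rate; rewrite ?ai.
Qed.

(* Induction on the number of breakpoints of the two runs below t. *)
Lemma dominated_until_exh t : tau <= t -> t <= t_exh -> dominated t.
Proof.
pose F (x : 'I_m.+2 + 'I_m.+2) := match x with inl k => tP k | inr k => tS k end.
have F_k0 : F (inl (inord k0)) = tau by rewrite /= inordK // ltnS leqW.
suff dom_below N t' : (#|[set x | (F x < t')%R]| < N)%N ->
    tau <= t' -> t' <= t_exh -> dominated t'.
  exact: dom_below (ltnSn _).
elim: N t' => // N IH {}t cnt tau_t t_e.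
case: (eqVneq t tau) => [->|ne]; first exact: dominated_tau.
have tau_lt : F (inl (inord k0)) < t by rewrite F_k0 lt_neqAle eq_sym ne.
have [s [tau_s st cnt_s below]] := exists_prev_value tau_lt.
rewrite F_k0 in tau_s.
have dom_s := IH s (leq_trans cnt_s cnt) tau_s (le_trans (ltW st) t_e).
have s0 : 0 <= s := le_trans (run_time_ge0 _ _) tau_s.
have s1 : s < 1 := lt_le_trans st (le_trans t_e (run_time_le1 _ _)).
have [b [bM Pb1 Pb2]] := exists_phase bP s0 s1.
have [p [pM Sp1 Sp2]] := exists_phase bS s0 s1.
apply: (dominated_step tau_s st t_e dom_s pM Sp1 _ bM Pb1); rewrite leNgt; apply/negP.
  move=> lt; have := below (inr (inord p.+1)); rewrite /= inordK // => /(_ lt).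
  by move/(lt_le_trans Sp2); rewrite ltxx.
move=> lt; have := below (inl (inord b.+1)); rewrite /= inordK // => /(_ lt).
by move/(lt_le_trans Pb2); rewrite ltxx.
Qed.

Lemma truthful_others_exh : t_exh < 1 -> OP t_exh = q h - (share0 + r i * (t_exh - tau)).
Proof.
move=> e1; have k1M : (k1 < m.+1)%N.
  by move: k1_le e1; rewrite leq_eqVlt => /orP [/eqP ->|//]; rewrite run_time_last ltxx.
have CPe : CP h t_exh = q h := consumed_exh (ltnW k1M) (h_in_k1 k1M) (lexx _).
rewrite -CPe (consumed_split _ i) held_at_phase ?(ltnW k1M) //.
rewrite -(run_alloc_exh i (h_in_k1 k1M) (ltnW k1M)) truthful_alloc_h.
by rewrite addrC addKr.
Qed.

Lemma truthful_other_eater : t_exh < 1 ->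
  exists a k, [/\ a != i, (k < k1)%N, cur (bP a) (EP k) = Some h & tP k < t_exh].
Proof.
move=> e1; have OP_gt0 : 0 < OP t_exh.
  rewrite truthful_others_exh // subr_gt0 mulrBr.
  have := share0_le; have := r_le_q i h; have : r i * t_exh < r i by rewrite gtr_pMr.
  lra.
have [a ai Ha] : exists2 a, a != i & 0 < HP a h t_exh.
  move: OP_gt0; rewrite lt_def => /andP [+ _].
  rewrite psumr_neq0 => [/hasP [a _ /andP [ai Ha]]|a _]; last exact: held_ge0.
  by exists a.
have [k [_ cur_k tk]] := held_gt0 Ha.
exists a, k; split=> //; rewrite ltnNge; apply/negP => /(run_time_mono bP).
by move/(lt_le_trans tk); rewrite ltxx.
Qed.

(* Some other agent eats h truthfully before t_exh; in the deviating run it still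
   eats h right after t_exh. *)
Lemma others_dev_grow : t_exh < 1 -> CS h t_exh < q h -> OS t_exh < OS 1.
Proof.
move=> e1 CSlt; have [a [k [ai kk1 cur_k tk]]] := truthful_other_eater e1.
have e0 : 0 <= t_exh := le_trans (run_time_ge0 _ _) (ltW tau_lt_t_exh).
have [p [pM Sp1 Sp2]] := exists_phase bS e0 e1.
have hS : h \notin ES p.
  by apply: contraTN CSlt => hE; rewrite (consumed_exh (ltnW pM) hE Sp1) ltxx.
have dom := dominated_until_exh (ltW tau_lt_t_exh) (lexx _).
have kM : (k <= m.+1)%N by apply: leq_trans (ltnW kk1) k1_le.
have sub := exh_dominated dom pM Sp1 Sp2 kM (ltW tk) (h_notin_before_k1 kk1).
have cur_S : cur (bS a) (ES p) = Some h by rewrite bS_bP // (cur_subset cur_k sub hS).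
have rate_a : r a <= \sum_(a' | a' != i) eat_rate bS p a' h.
  rewrite (bigD1 a) //= /eat_rate cur_S eqxx lerDl sumr_ge0 // => a' _.
  exact: eat_rate_ge0.
apply: (lt_le_trans (y := OS (tS p.+1))); last exact/others_mono/run_time_le1.
rewrite (others_shift _ _ pM Sp1 (ltW Sp2) (lexx _)) ltrDl.
by rewrite (lt_le_trans _ (ler_wpM2l _ rate_a)) ?mulr_gt0 ?subr_gt0 // subr_ge0 ltW.
Qed.

Lemma deviation_loses_h : run_alloc bS m.+1 i h < run_alloc bP m.+1 i h.
Proof.
rewrite truthful_alloc_h -(held_at_phase bS i h (leqnn _)) run_time_last.
case: (eqVneq t_exh 1) => [e1|ne1].
  by rewrite e1 deviating_held_h_lt.
have e1 : t_exh < 1 by rewrite lt_neqAle ne1 run_time_le1.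
have end_S : HS i h 1 + OS 1 <= q h by rewrite -consumed_split consumed_le.
have OP_e := truthful_others_exh e1.
case: (ltP (CS h t_exh) (q h)) => [CSlt|CSge].
  have := (dominated_until_exh (ltW tau_lt_t_exh) (lexx _)).2 CSlt.
  have := others_dev_grow e1 CSlt.
  lra.
have CS_e : HS i h t_exh + OS t_exh = q h.
  by rewrite -consumed_split; apply/eqP; rewrite eq_le consumed_le.
have := others_mono bS i h (run_time_le1 bP k1).
have := deviating_held_h_lt tau_lt_t_exh (run_time_le1 bP k1).
lra.
Qed.

End Deviation.

Lemma sg_deviation_loses (bP bS : 'I_n -> {perm 'I_m}) i k0 :
  (forall a, a != i -> bS a = bP a) -> (k0 <= m)%N -> sg_run bS k0 = sg_run bP k0 ->
  run_time bP k0 < 1 -> cur (bS i) (run_exh bP k0) != cur (bP i) (run_exh bP k0) ->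
  exists2 kh : 'I_m,
    forall l : 'I_m, (l < kh)%N -> SG_alloc q r bS i (bP i l) = SG_alloc q r bP i (bP i l)
    & SG_alloc q r bS i (bP i kh) < SG_alloc q r bP i (bP i kh).
Proof.
move=> bS_bP k0m run_k0 tau_lt1 diverge.
case cur_k0 : (cur (bP i) (run_exh bP k0)) => [h|]; last first.
  by move: diverge; rewrite cur_k0 (cur_None_indep _ cur_k0) eqxx.
have [k1 [k1M before_k1 at_k1]] := first_exh_phase bP h.
have cur_dev : cur (bS i) (run_exh bP k0) != Some h by rewrite -cur_k0.
have loses := deviation_loses_h bS_bP k0m run_k0 cur_k0 cur_dev tau_lt1 k1M before_k1 at_k1.
exists ((bP i)^-1 h)%g; last by rewrite permKV.
move=> l lh; have /= gE := cur_prefix_in cur_k0 lh.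
have gES : bP i l \in run_exh bS k0 by rewrite /run_exh run_k0.
have kM : (k0 <= m.+1)%N := leqW k0m.
rewrite /SG_alloc -/(run_alloc bS m.+1) -/(run_alloc bP m.+1).
by rewrite !(run_alloc_exh i _ kM) // /run_alloc run_k0.
Qed.

End SynchronizedGreedy.

Theorem theorem2 (R : realFieldType) (n m : nat)
    (q : 'I_m -> R) (r : 'I_n -> R) (pi : 'I_n -> {perm 'I_m})
    (hq : forall j, 0 < q j) (hr : forall i, 0 < r i)
    (hsum : \sum_(j < m) q j = \sum_(i < n) r i)
    (hminmax : forall (i : 'I_n) (j : 'I_m), r i <= q j) :
  forall (i : 'I_n) (sigma_i : {perm 'I_m}),
    ~ lex_pref (pi i)
        (SG_alloc q r (fun k => if k == i then sigma_i else pi k) i)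
        (SG_alloc q r pi i).
Proof.
move=> i sigma; set bS := fun k => _.
have bS_pi a : a != i -> bS a = pi a by move=> ai; rewrite /bS (negbTE ai).
pose diverge k :=
  (m < k)%N || (cur (bS i) (run_exh q r pi k) != cur (pi i) (run_exh q r pi k)).
have div_ex : exists k, diverge k by exists m.+1; rewrite /diverge ltnSn.
have [k0 div_k0 k0_min] := ex_minnP div_ex.
have k0M : (k0 <= m.+1)%N by apply: k0_min; rewrite /diverge ltnSn.
have agree : sg_run q r bS k0 = sg_run q r pi k0.
  apply: sg_run_agree bS_pi _ => l lk0; apply/eqP; apply: contraTT lk0 => ne.
  by rewrite -leqNgt k0_min // /diverge ne orbT.
case: (eqVneq (run_time q r pi k0) 1) => [t1|t_ne1].
  by rewrite (sg_alloc_agree hq hr k0M agree t1); exact: lex_pref_irrefl.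
have k0m : (k0 <= m)%N.
  move: k0M; rewrite leq_eqVlt => /orP [/eqP k0E|//].
  by rewrite k0E (run_time_last hq hr) eqxx in t_ne1.
have t_lt1 : run_time q r pi k0 < 1 by rewrite lt_neqAle t_ne1 (run_time_le1 hq hr).
move: div_k0; rewrite /diverge ltnNge k0m /= => div_k0.
have [kh same lt] := sg_deviation_loses hq hr hminmax bS_pi k0m agree t_lt1 div_k0.
exact: not_lex_pref same lt.
Qed.
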